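(* Let $(n_k)_{k\geq1}$ be a strictly increasing sequence of positive integers, $K\geq2$, $s>1$, $\alpha\in(0,1)$, and let $$m_k=\left\lceil\frac{n_k}{\theta}\ln\left(\frac{\zeta(s)\,n_k^{s+1}}{\alpha}\right)\right\rceil,\qquad k=1,\ldots,K.$$ Let $B_2,\ldots,B_K$ be mutually independent random variables with $B_k\sim\mathrm{Bin}\left(m_k,\frac{n_k-n_{k-1}}{n_k}\right)$ (number of trials $m_k$, success probability $\frac{n_k-n_{k-1}}{n_k}$), and let $U_K=\sum_{k=2}^KB_k$. Then $$\mathrm{Var}(U_K)<\mathbb{E}(U_K)\leq m_K+n_K-m_1.$$
   Context: $\zeta$ denotes the Riemann zeta function and $\theta=\frac{3\ln(3/2)-1}{2}\approx0.108$. *)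

From HB Require Import structures.
From mathcomp Require Import all_boot all_order all_algebra.
From mathcomp Require Import all_classical all_reals all_analysis.
Set Implicit Arguments. Unset Strict Implicit. Unset Printing Implicit Defensive.
Import Order.TTheory GRing.Theory Num.Def Num.Theory.
Local Open Scope classical_set_scope.
Local Open Scope ring_scope.

Definition riemann_zeta {R : realType} (s : R) : R :=
  limn (fun N : nat => \sum_(0 <= i < N) ((i.+1)%:R `^ (- s))).

Definition theta {R : realType} : R := (3 * ln (3 / 2) - 1) / 2.

Definition mseq {R : realType} (s alpha : R) (n : nat -> nat) (k : nat) : int :=
  ceil ((n k)%:R / theta * ln (riemann_zeta s * ((n k)%:R `^ (s + 1)) / alpha)).

Definition mutually_independent {d} {T : measurableType d} {R : realType}
  (P : probability T R) (X : nat -> T -> R) (a b : nat) : Prop :=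
  forall A : nat -> set R, (forall k, measurable (A k)) ->
    P (\bigcap_(k in [set k : nat | (a <= k <= b)%N]) (X k @^-1` A k)) =
    (\prod_(a <= k < b.+1) P (X k @^-1` A k))%E.

From HB Require Import structures.
From mathcomp Require Import all_boot all_order all_algebra.
From mathcomp Require Import all_classical all_reals all_analysis.
From mathcomp Require Import ring lra measurable_realfun.
Import Order.TTheory GRing.Theory Num.Def Num.Theory.
Import numFieldNormedType.Exports.
Local Open Scope classical_set_scope.
Local Open Scope ring_scope.

(* Each B_k agrees almost surely with the simple function sum_(j <= m_k) j 1{B_k = j},
   because the binomial weights sum to 1. Hence E(U_K) = sum_k m_k p_k and, the B_k
   being independent and so pairwise uncorrelated, Var(U_K) = sum_k m_k p_k (1 - p_k),
   where p_k = (n_k - n_(k-1)) / n_k lies in (0, 1); this gives Var(U_K) < E(U_K).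
   For the upper bound write m_k = ceil(n_k y_k) with
   y_k = ln(zeta(s) n_k^(s+1) / alpha) / theta, which is positive and nondecreasing
   because zeta(s) >= 1 and theta > 0. Then m_k n_(k-1) / n_k >= n_(k-1) y_(k-1)
   > m_(k-1) - 1, i.e. m_k p_k <= m_k - m_(k-1) + 1, and summing over k telescopes to
   E(U_K) <= m_K - m_1 + (K - 1) <= m_K + n_K - m_1. *)

Lemma theta_gt0 (R : realType) : 0 < @theta R.
Proof.
rewrite /theta divr_gt0 //.
suff : 3^-1 < ln (3 / 2) :> R by lra.
rewrite -ltr_expR lnK ?posrE //.
have expRN : expR (- 3^-1) * expR 3^-1 = 1 :> R by rewrite -expRD addNr expR0.
have : 1 - 3^-1 < expR (- 3^-1) :> R by rewrite expR_gt1Dx // oppr_eq0 invr_eq0.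
have : 0 < expR 3^-1 :> R by exact: expR_gt0.
nra.
Qed.

(* [riemann_zeta] is a [limn], meaningless unless the p-series converges: dyadic
   blocks (Cauchy condensation) bound its partial sums by a geometric series of
   ratio 2^(1-s). *)
Section riemann_zeta_bound.
Context {R : realType} {s : R}.
Hypothesis s_gt1 : 1 < s.

Let zeta_partial (N : nat) : R := \sum_(0 <= i < N) (i.+1)%:R `^ (- s).
Let r : R := 2 `^ (1 - s).

Let r_gt0 : 0 < r. Proof. by rewrite powR_gt0. Qed.

Let r_lt1 : r < 1.
Proof.
rewrite /r /powR (negbTE (_ : (2:R) != 0)) // expR_lt1 pmulr_llt0 ?subr_lt0 //.
by rewrite ln_gt0 // ltr1n.
Qed.

Let zeta_block_le J :
  \sum_(2 ^ J <= i < 2 ^ J.+1) (i.+1)%:R `^ (- s) <= r ^+ J.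
Proof.
have s_ge0 : 0 <= s := ltW (lt_trans ltr01 s_gt1).
have term_le i : (2 ^ J <= i)%N -> (i.+1)%:R `^ (- s) <= (2 ^ J)%:R `^ (- s) :> R.
  move=> Ji; rewrite !powRN lef_pV2 ?posrE ?powR_gt0 ?ltr0n ?expn_gt0 //.
  by rewrite ge0_ler_powR ?nnegrE ?ler0n // ler_nat; exact: leqW.
apply: (le_trans (ler_sum_nat (fun i Ji => term_le i (proj1 (andP Ji))))).
rewrite sumr_const_nat expnS mul2n -addnn addnK -(mulr_natl (_ `^ _)).
have -> : (2 ^ J)%:R * (2 ^ J)%:R `^ (- s) = (2 ^ J)%:R `^ (1 - s) :> R.
  by rewrite powRD ?powRr1 ?ler0n // pnatr_eq0 expn_eq0 implybT.
by rewrite natrX -powR_mulrn // -powRrM mulrC powRrM powR_mulrn ?powR_ge0.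
Qed.

Let zeta_partial_dyadic_le J :
  zeta_partial (2 ^ J) <= 1 + series (geometric 1 r) J.
Proof.
elim: J => [|J IH].
  by rewrite /zeta_partial /series /= big_nat1 big_geq // powR1 addr0.
rewrite /zeta_partial (big_cat_nat _ (n := 2 ^ J)) ?leq_exp2l //= seriesSr addrA.
by rewrite lerD //= mul1r zeta_block_le.
Qed.

Lemma riemann_zeta_ge1 : 1 <= riemann_zeta s.
Proof.
have nd : nondecreasing_seq zeta_partial.
  apply/nondecreasing_seqP => N.
  by rewrite /zeta_partial big_nat_recr //= lerDl powR_ge0.
have cv : cvgn zeta_partial.
  apply: nondecreasing_is_cvgn => //; exists (1 + (1 - r)^-1) => _ [N _ <-].
  apply: (le_trans (nd _ _ (ltnW (ltn_expl N (ltnSn 1))))).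
  apply: (le_trans (zeta_partial_dyadic_le N)); rewrite lerD2l.
  by rewrite -[X in _ <= X]mul1r geometric_le_lim // ger0_norm ?ltW.
by have := nondecreasing_cvgn_le nd cv 1; rewrite /zeta_partial big_nat1 powR1.
Qed.

End riemann_zeta_bound.

Lemma ceilB1_le_ceil_ratio {R : archiRealFieldType} (a b u v : R) :
  0 <= a -> 0 < b -> u <= v ->
  (ceil (a * u))%:~R - 1 <= (ceil (b * v))%:~R * (a / b).
Proof.
move=> a_ge0 b_gt0 uv.
have ratio_ge0 : 0 <= a / b by rewrite divr_ge0 // ltW.
have := ceilB1_lt (a * u); rewrite intrB => /ltW/le_trans; apply.
apply: le_trans (ler_wpM2l a_ge0 uv) _.
have -> : a * v = b * v * (a / b) by field; rewrite lt0r_neq0.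
by rewrite ler_wpM2r // ceil_ge.
Qed.

Section mseq_bounds.
Context {R : realType} {n : nat -> nat} {s alpha : R}.
Hypotheses (n_gt0 : forall k, (1 <= k)%N -> (0 < n k)%N)
  (n_lt : forall k, (1 <= k)%N -> (n k < n k.+1)%N)
  (s_gt1 : 1 < s) (alpha_gt0 : 0 < alpha) (alpha_lt1 : alpha < 1).

Local Notation m := (mseq s alpha n).

Let s_gt0 : 0 < s. Proof. exact: lt_trans ltr01 s_gt1. Qed.

Let ln_arg k := riemann_zeta s * (n k)%:R `^ (s + 1) / alpha.
Let y k := ln (ln_arg k) / theta.

Let mseqE k : m k = ceil ((n k)%:R * y k).
Proof. by rewrite /mseq /y mulrAC -mulrA. Qed.

Let ln_arg_gt1 k : (1 <= k)%N -> 1 < ln_arg k.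
Proof.
move=> k_ge1; rewrite /ln_arg ltr_pdivlMr // mul1r.
have n_ge1 : 1 <= (n k)%:R :> R by rewrite ler1n n_gt0.
apply: lt_le_trans alpha_lt1 (mulr_ege1 (riemann_zeta_ge1 s_gt1) _).
by rewrite (le_trans n_ge1) ?le1r_powR // lerDr ltW.
Qed.

Let y_gt0 k : (1 <= k)%N -> 0 < y k.
Proof. by move=> k_ge1; rewrite divr_gt0 ?theta_gt0 // ln_gt0 ?ln_arg_gt1. Qed.

Let y_le k : (1 <= k)%N -> y k <= y k.+1.
Proof.
move=> k_ge1; rewrite ler_pM2r ?invr_gt0 ?theta_gt0 //.
rewrite ler_ln ?posrE ?(lt_trans ltr01) ?ln_arg_gt1 //.
have zeta_gt0 := lt_le_trans ltr01 (riemann_zeta_ge1 s_gt1).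
rewrite /ln_arg ler_pM2r ?invr_gt0 // ler_pM2l //.
apply: ge0_ler_powR; rewrite ?nnegrE ?ler0n ?ler_nat //.
- exact: addr_ge0 (ltW s_gt0) ler01.
- exact: ltnW (n_lt k k_ge1).
Qed.

Lemma mseq_gt0 k : (1 <= k)%N -> 0 < m k.
Proof. by move=> k_ge1; rewrite mseqE ceil_gt0 mulr_gt0 ?ltr0n ?n_gt0 ?y_gt0. Qed.

Lemma mseqS_mean_le k : (1 <= k)%N ->
  (m k.+1)%:~R * (((n k.+1)%:R - (n k)%:R) / (n k.+1)%:R)
    <= (m k.+1)%:~R - (m k)%:~R + 1 :> R.
Proof.
move=> k_ge1; have nk1_gt0 : 0 < (n k.+1)%:R :> R by rewrite ltr0n n_gt0.
have := ceilB1_le_ceil_ratio _ _ _ _ (ler0n R (n k)) nk1_gt0 (y_le _ k_ge1).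
rewrite -!mseqE; set a := (n k)%:R; set b := (n k.+1)%:R.
have -> : (m k.+1)%:~R * ((b - a) / b) = (m k.+1)%:~R - (m k.+1)%:~R * (a / b) :> R.
  by field; rewrite lt0r_neq0.
lra.
Qed.

Let index_le_n k : (1 <= k)%N -> (k <= n k)%N.
Proof.
elim: k => [//|[|k] IH _]; first exact: n_gt0.
by apply: leq_ltn_trans (IH isT) _; exact: n_lt.
Qed.

Lemma sum_mseq_mean_le K : (1 <= K)%N ->
  \sum_(2 <= k < K.+1) (m k)%:~R * (((n k)%:R - (n k.-1)%:R) / (n k)%:R)
    <= (m K + (n K)%:Z - m 1%N)%:~R :> R.
Proof.
move=> K_ge1; rewrite big_add1 /=.
apply: le_trans (ler_sum_nat (fun k k_in => mseqS_mean_le k (proj1 (andP k_in)))) _.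
have K_le : (K - 1)%:R <= (n K)%:R :> R.
  by rewrite ler_nat (leq_trans (leq_subr 1 K)) ?index_le_n.
rewrite big_split /= telescope_sumr // sumr_const_nat intrB intrD -pmulrn.
lra.
Qed.

End mseq_bounds.

Section binomial_pmf_moments.
Context {R : realType}.
Implicit Types (M : nat) (p : R).

Lemma binomial_pmf_sum1 M p : \sum_(j < M.+1) binomial_pmf M p j = 1.
Proof.
have := exprDn (1 - p) p M; rewrite subrK expr1n => ->.
by apply: eq_bigr => j _; rewrite /binomial_pmf mulrC.
Qed.

Let binomial_pmfE M p j :
  binomial_pmf M p j = 'C(M, j)%:R * (p ^+ j * (1 - p) ^+ (M - j)).
Proof. by rewrite /binomial_pmf mulr_natl. Qed.

Lemma sum_mul_binomial_pmfS M p (g : nat -> R) :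
  \sum_(j < M.+2) j%:R * g j * binomial_pmf M.+1 p j =
  M.+1%:R * p * \sum_(j < M.+1) g j.+1 * binomial_pmf M p j.
Proof.
rewrite big_ord_recl mul0r mul0r add0r mulr_sumr.
apply: eq_bigr => j _; rewrite !binomial_pmfE /= subSS.
have binS : 'C(M.+1, j.+1)%:R = M.+1%:R * 'C(M, j)%:R / j.+1%:R :> R.
  by rewrite -natrM mul_bin_diag natrM; field.
have -> : bump 0 j = j.+1 by [].
by rewrite binS exprS; field.
Qed.

Lemma binomial_pmf_mean M p :
  \sum_(j < M.+1) j%:R * binomial_pmf M p j = M%:R * p.
Proof.
case: M => [|M]; first by rewrite big_ord1 !mul0r.
have := sum_mul_binomial_pmfS M p (fun=> 1).
under eq_bigr do rewrite mulr1.
by move=> ->; under eq_bigr do rewrite mul1r; rewrite binomial_pmf_sum1 mulr1.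
Qed.

Lemma binomial_pmf_second_moment M p :
  \sum_(j < M.+1) j%:R ^+ 2 * binomial_pmf M p j =
  M%:R * p * (1 - p) + (M%:R * p) ^+ 2.
Proof.
case: M => [|M]; first by rewrite big_ord1 expr0n /= !mul0r add0r expr0n.
have := sum_mul_binomial_pmfS M p (fun j => j%:R).
under eq_bigr do rewrite -expr2.
move=> ->; under eq_bigr do rewrite -natr1 mulrDl mul1r.
by rewrite big_split /= binomial_pmf_mean binomial_pmf_sum1; ring.
Qed.

End binomial_pmf_moments.

Section probability_moments.
Context {d : measure_display} {T : measurableType d} {R : realType}
  {P : probability T R}.

Lemma Lfun_indic (A : set T) (r : R) : measurable A -> 0 < r ->
  (\1_A : T -> R) \in Lfun P r%:E.
Proof.
move=> mA r_gt0; rewrite inE /=; apply/andP; split; rewrite inE /=.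
  exact: measurable_indic.
rewrite /finite_norm unlock poweR_lty //.
apply: (@le_lt_trans _ _ (\int[P]_x (cst 1%E) x)%E).
  apply: ge0_le_integral => //.
  - by move=> x _ /=; rewrite lee_fin powR_ge0.
  - apply/measurable_EFinP; apply: measurableT_comp (measurable_powR _) _.
    exact: measurableT_comp (measurable_indic mA).
  - move=> x _ /=; rewrite lee_fin indicE.
    by case: (x \in A); rewrite ?normr1 ?normr0 ?powR1 ?powR0 ?gt_eqF.
by rewrite integral_cst // mul1e (le_lt_trans (probability_le1 _ _)) ?ltry.
Qed.

Lemma expectation_big (I : Type) (r : seq I) (F : I -> T -> R) :
  (forall i, F i \in Lfun P 1) ->
  ('E_P[\sum_(i <- r) F i] = \sum_(i <- r) 'E_P[F i])%E.
Proof.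
move=> F1; elim: r => [|i r IH]; first by rewrite !big_nil expectation_cst.
by rewrite !big_cons expectationD ?IH // rpred_sum.
Qed.

Lemma expectation_ae_eq (X Y : T -> R) :
  measurable_fun setT X -> measurable_fun setT Y -> X = Y %[ae P] ->
  'E_P[X]%E = 'E_P[Y]%E.
Proof.
move=> mX mY XY; rewrite unlock; apply: ae_eq_integral => //.
- exact/measurable_EFinP.
- exact/measurable_EFinP.
- by apply: filterS XY => x /[apply] /= ->.
Qed.

Lemma variance_ae_eq (X Y : T -> R) :
  measurable_fun setT X -> measurable_fun setT Y -> X = Y %[ae P] ->
  'V_P[X]%E = 'V_P[Y]%E.
Proof.
move=> mX mY XY.
rewrite /variance !covariance.unlock (expectation_ae_eq _ _ mX mY XY).
apply: expectation_ae_eq.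
- by apply: measurable_funM; exact: measurable_funB.
- by apply: measurable_funM; exact: measurable_funB.
- by apply: filterS XY => x /[apply] /= Xx; rewrite /GRing.mul /= Xx.
Qed.

Lemma covariance_sumr (Y : T -> R) (I : Type) (r : seq I) (F : I -> T -> R) :
  Y \in Lfun P 2%:E -> (forall i, F i \in Lfun P 2%:E) ->
  covariance P Y (\sum_(i <- r) F i) = (\sum_(i <- r) covariance P Y (F i))%E.
Proof.
move=> Y2 F2; elim: r => [|i r IH]; first by rewrite !big_nil covariance_cst_r.
by rewrite !big_cons covarianceDr ?rpred_sum ?lee1n // IH.
Qed.

Lemma variance_sum (I : eqType) (r : seq I) (F : I -> T -> R) : uniq r ->
  (forall i, F i \in Lfun P 2%:E) ->
  {in r &, forall i j, i != j -> covariance P (F i) (F j) = 0%E} ->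
  'V_P[(\sum_(i <- r) F i)%R]%E = (\sum_(i <- r) 'V_P[F i])%E.
Proof.
move=> + F2; elim: r => [_ _|i r IH /= /andP[ir r_uniq] uncorr].
  by rewrite !big_nil variance_cst.
rewrite !big_cons varianceD ?rpred_sum ?lee1n // covariance_sumr ?lee1n //.
have -> : \sum_(j <- r) covariance P (F i) (F j) = 0%E.
  apply: big1_seq => j /andP[_ jr]; apply: uncorr.
  - exact: mem_head.
  - by rewrite inE jr orbT.
  - by apply/eqP => ij; rewrite ij jr in ir.
rewrite mule0 adde0.
f_equal; apply: IH => // j k jr kr.
by apply: uncorr; rewrite inE ?jr ?kr orbT.
Qed.

End probability_moments.

Section nat_levels.
Context {d : measure_display} {T : measurableType d} {R : realType}
  {P : probability T R}.

Definition nat_levels (X : T -> R) (M : nat) : T -> R :=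
  \sum_(j < M.+1) j%:R \o* \1_(X @^-1` [set j%:R]).

Implicit Types (X Y : {RV P >-> R}) (M N : nat).

Lemma measurable_level X (j : nat) : measurable (X @^-1` [set j%:R]).
Proof. exact: measurable_funPTI (measurable_set1 _). Qed.

Lemma nat_levelsE X M x :
  nat_levels X M x = \sum_(j < M.+1) \1_(X @^-1` [set j%:R]) x * j%:R.
Proof. by rewrite /nat_levels fct_sumE. Qed.

Lemma nat_levels_id X M (j : 'I_M.+1) x : X x = j%:R -> nat_levels X M x = X x.
Proof.
move=> Xx; rewrite nat_levelsE (bigD1 j) //= big1 ?addr0.
  by rewrite indicE mem_set ?mul1r.
move=> l lj; rewrite indicE memNset ?mul0r //= Xx => /eqP.
by rewrite eqr_nat => /eqP/val_inj jl; rewrite jl eqxx in lj.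
Qed.

Lemma nat_levels_Lfun X M r : 1 <= r -> nat_levels X M \in Lfun P r%:E.
Proof.
move=> r_ge1; apply: rpred_sum => j _; apply: Lfun_scale => //.
by apply: Lfun_indic; [exact: measurable_level | exact: lt_le_trans ltr01 r_ge1].
Qed.

Lemma expectation_nat_levels X M (f : nat -> R) :
  (forall j, P (X @^-1` [set j%:R]) = (f j)%:E) ->
  'E_P[nat_levels X M]%E = (\sum_(j < M.+1) j%:R * f j)%:E.
Proof.
move=> Pf; have L1 j : \1_(X @^-1` [set j%:R]) \in Lfun P 1.
  exact: Lfun_indic (measurable_level X j) ltr01.
rewrite expectation_big => [|j]; last exact: Lfun_scale.
rewrite -sumEFin; apply: eq_bigr => j _.
by rewrite expectationZl ?expectation_indic ?Pf ?measurable_level.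
Qed.

Lemma expectation_nat_levelsM X Y M N (h : nat -> nat -> R) :
  (forall j l, P (X @^-1` [set j%:R] `&` Y @^-1` [set l%:R]) = (h j l)%:E) ->
  'E_P[nat_levels X M * nat_levels Y N]%E =
    (\sum_(j < M.+1) \sum_(l < N.+1) j%:R * l%:R * h j l)%:E.
Proof.
move=> Ph; pose A (Z : T -> R) (j : nat) : set T := Z @^-1` [set j%:R].
have mAA j l : measurable (A X j `&` A Y l).
  by apply: measurableI; exact: measurable_level.
have -> : nat_levels X M * nat_levels Y N =
    \sum_(j < M.+1) \sum_(l < N.+1) (j%:R * l%:R) \o* \1_(A X j `&` A Y l).
  apply/funext => x; rewrite fct_sumE [LHS]/GRing.mul /= !nat_levelsE mulr_suml.
  apply: eq_bigr => j _; rewrite mulr_sumr fct_sumE; apply: eq_bigr => l _.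
  by rewrite /A indicI /=; ring.
rewrite expectation_big => [|j]; last first.
  by apply: rpred_sum => l _; apply: Lfun_scale => //; exact: Lfun_indic.
rewrite -sumEFin; apply: eq_bigr => j _.
rewrite expectation_big => [|l]; last by apply: Lfun_scale => //; exact: Lfun_indic.
rewrite -sumEFin; apply: eq_bigr => l _.
by rewrite expectationZl ?expectation_indic ?Ph ?Lfun_indic.
Qed.

Lemma variance_nat_levels X M (f : nat -> R) :
  (forall j, P (X @^-1` [set j%:R]) = (f j)%:E) ->
  'V_P[nat_levels X M] =
    (\sum_(j < M.+1) j%:R ^+ 2 * f j - (\sum_(j < M.+1) j%:R * f j) ^+ 2)%:E.
Proof.
move=> Pf; have PXX j l : P (X @^-1` [set j%:R] `&` X @^-1` [set l%:R]) =
    (if j == l then f j else 0)%:E.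
  case: eqP => [<-|/eqP jl]; first by rewrite setIid.
  suff -> : X @^-1` [set j%:R] `&` X @^-1` [set l%:R] = set0 by rewrite measure0.
  by apply/seteqP; split => x // [/= -> /eqP]; rewrite eqr_nat (negbTE jl).
rewrite varianceE ?nat_levels_Lfun ?ler1n // (expectation_nat_levels _ _ _ Pf).
rewrite expr2 (expectation_nat_levelsM _ _ _ _ _ PXX) -EFin_expe -EFinB.
congr (EFin (_ - _)); apply: eq_bigr => j _.
rewrite (bigD1 j) //= eqxx big1 ?addr0 => [|l lj]; first by rewrite expr2.
by rewrite ifF ?mulr0 //; apply/negbTE; rewrite eq_sym.
Qed.

Lemma covariance_nat_levels_indep X Y M N (f g : nat -> R) :
  (forall j, P (X @^-1` [set j%:R]) = (f j)%:E) ->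
  (forall l, P (Y @^-1` [set l%:R]) = (g l)%:E) ->
  (forall j l, P (X @^-1` [set j%:R] `&` Y @^-1` [set l%:R]) = (f j * g l)%:E) ->
  covariance P (nat_levels X M) (nat_levels Y N) = 0%E.
Proof.
move=> Pf Pg Pfg.
rewrite covarianceE ?nat_levels_Lfun ?Lfun2_mul_Lfun1 ?nat_levels_Lfun ?ler1n //.
rewrite (expectation_nat_levelsM _ _ _ _ _ Pfg) (expectation_nat_levels _ _ _ Pf)
  (expectation_nat_levels _ _ _ Pg) -EFinM -EFinB.
rewrite mulr_suml; under [X in _ - X]eq_bigr do rewrite mulr_sumr.
rewrite -sumrB big1 // => j _; rewrite -sumrB big1 // => l _; ring.
Qed.

Lemma nat_levels_ae X M (f : nat -> R) :
  (forall j, P (X @^-1` [set j%:R]) = (f j)%:E) -> \sum_(j < M.+1) f j = 1 ->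
  nat_levels X M = X %[ae P].
Proof.
move=> Pf f_sum1; pose E := \big[setU/set0]_(j < M.+1) X @^-1` [set j%:R].
have mE : measurable E by apply: bigsetU_measurable => j _; exact: measurable_level.
have PE : P E = 1%E.
  rewrite measure_bigsetU_ord => [| j | j l _ _ [x [/= -> /eqP]]].
  - transitivity (\sum_(j < M.+1) (f j)%:E)%E; last by rewrite sumEFin f_sum1.
    by apply: eq_bigr => j _; exact: Pf.
  - exact: measurable_level.
  - by rewrite eqr_nat => /eqP/val_inj.
exists (~` E); split; first exact: measurableC.
  by rewrite probability_setC // PE subee.
move=> x /= neq Ex; apply: neq => _.
move: Ex; rewrite /E -(bigcup_mkord _ (fun j => X @^-1` [set j%:R])).
by case=> j /= j_lt; exact: (nat_levels_id _ _ (Ordinal j_lt)).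
Qed.

End nat_levels.

Lemma mutually_independent_pair {d} {T : measurableType d} {R : realType}
    {P : probability T R} {X : nat -> T -> R} {a b i k : nat} {A C : set R} :
  mutually_independent P X a b -> (a <= i <= b)%N -> (a <= k <= b)%N -> i != k ->
  measurable A -> measurable C ->
  P (X i @^-1` A `&` X k @^-1` C) = (P (X i @^-1` A) * P (X k @^-1` C))%E.
Proof.
move=> indep i_in k_in ik mA mC.
have ki : (k == i) = false by rewrite eq_sym (negbTE ik).
pose S t := if t == i then A else if t == k then C else [set: R].
have mS t : measurable (S t) by rewrite /S; case: ifP => _; [|case: ifP].
have := indep S mS.
have -> : \bigcap_(t in [set t | (a <= t <= b)%N]) X t @^-1` S t =
    X i @^-1` A `&` X k @^-1` C.
  apply/seteqP; split => [x XS | x [XA XC] t _].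
    by split; [have := XS i i_in | have := XS k k_in]; rewrite /S ?eqxx // ki.
  by rewrite /S; case: eqP => [->|_] //; case: eqP => [->|_].
move=> ->; have ab_uniq : uniq (index_iota a b.+1) by exact: iota_uniq.
rewrite (bigD1_seq i) ?mem_index_iota ?ltnS //= -big_filter.
rewrite (bigD1_seq k) ?mem_filter ?ki ?mem_index_iota ?ltnS ?filter_uniq //=.
rewrite big1_seq ?mule1 => [|t /andP[tk]]; last first.
  rewrite mem_filter => /andP[ti _].
  by rewrite /S (negbTE ti) (negbTE tk) preimage_setT probability_setT.
by rewrite /S eqxx ki eqxx.
Qed.

Section independent_binomial_sum.
Context {d : measure_display} {T : measurableType d} {R : realType}
  {P : probability T R}.
Context {B : nat -> {RV P >-> R}} {M : nat -> nat} {p : nat -> R} {a b : nat}.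
Hypothesis B_binomial : forall k, (a <= k <= b)%N -> forall j : nat,
  P (B k @^-1` [set j%:R]) = (binomial_pmf (M k) (p k) j)%:E.

Let Y k := nat_levels (B k) (M k).

Let measurable_sum_Y : measurable_fun setT (\sum_(a <= k < b.+1) Y k).
Proof.
have : \sum_(a <= k < b.+1) Y k \in Lfun P 1.
  by apply: rpred_sum => k _; exact: nat_levels_Lfun.
by rewrite inE => /andP[]; rewrite inE.
Qed.

Let measurable_sum_B : measurable_fun setT (fun x => \sum_(a <= k < b.+1) B k x).
Proof. by apply: measurable_sum => k; exact: measurable_funP. Qed.

Let sum_Y_ae :
  \sum_(a <= k < b.+1) Y k = (fun x => \sum_(a <= k < b.+1) B k x) %[ae P].
Proof.
have : \forall x \ae P, forall k, (a <= k <= b)%N -> Y k x = B k x.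
  apply: ae_foralln => k; have [k_in|k_out] := boolP (a <= k <= b)%N.
    have := nat_levels_ae _ _ _ (B_binomial _ k_in) (binomial_pmf_sum1 _ _).
    by apply: filterS => x /(_ I) Yx _.
  exact: aeW.
apply: filterS => x YB _; rewrite fct_sumE; apply: eq_big_nat => k k_in.
by apply: YB; rewrite ltnS in k_in.
Qed.

Lemma expectation_binomial_sum :
  'E_P[fun x => (\sum_(a <= k < b.+1) B k x)%R]%E =
    (\sum_(a <= k < b.+1) (M k)%:R * p k)%:E.
Proof.
rewrite -(expectation_ae_eq _ _ measurable_sum_Y measurable_sum_B sum_Y_ae).
rewrite expectation_big => [|k]; last exact: nat_levels_Lfun.
rewrite -sumEFin; apply: eq_big_nat => k; rewrite ltnS => k_in.
by rewrite (expectation_nat_levels _ _ _ (B_binomial _ k_in)) binomial_pmf_mean.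
Qed.

Hypothesis B_indep : mutually_independent P (fun k => B k : T -> R) a b.

Lemma variance_binomial_sum :
  'V_P[fun x => (\sum_(a <= k < b.+1) B k x)%R]%E =
    (\sum_(a <= k < b.+1) (M k)%:R * p k * (1 - p k))%:E.
Proof.
rewrite -(variance_ae_eq _ _ measurable_sum_Y measurable_sum_B sum_Y_ae).
rewrite variance_sum.
- rewrite -sumEFin; apply: eq_big_nat => k; rewrite ltnS => k_in.
  rewrite (variance_nat_levels _ _ _ (B_binomial _ k_in)).
  by rewrite binomial_pmf_second_moment binomial_pmf_mean; congr EFin; ring.
- exact: iota_uniq.
- by move=> k; rewrite nat_levels_Lfun ?ler1n.
move=> i k; rewrite !mem_index_iota !ltnS => i_in k_in ik.
apply: covariance_nat_levels_indep (B_binomial _ i_in) (B_binomial _ k_in) _ => j l.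
rewrite (mutually_independent_pair B_indep i_in k_in ik) ?measurable_set1 //.
by rewrite (B_binomial _ i_in) (B_binomial _ k_in).
Qed.

End independent_binomial_sum.

Theorem lemma4 (R : realType) (d : measure_display) (T : measurableType d)
  (P : probability T R) (n : nat -> nat) (K : nat) (s alpha : R)
  (B : nat -> {RV P >-> R}) :
  (forall k, (1 <= k)%N -> (0 < n k)%N) ->
  (forall k, (1 <= k)%N -> (n k < n k.+1)%N) ->
  (2 <= K)%N -> 1 < s -> 0 < alpha < 1 ->
  mutually_independent P (fun k => (B k : T -> R)) 2 K ->
  (forall k, (2 <= k <= K)%N -> forall j : nat,
     P (B k @^-1` [set j%:R]) =
     (binomial_pmf `|mseq s alpha n k|%N
        (((n k)%:R - (n k.-1)%:R) / (n k)%:R : R) j)%:E) ->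
  let U := fun x => \sum_(2 <= k < K.+1) B k x in
  ('V_P[U] < 'E_P[U])%E /\
  ('E_P[U] <= ((mseq s alpha n K + (n K)%:Z - mseq s alpha n 1)%:~R)%:E)%E.
Proof.
move=> n_gt0 n_lt K_ge2 s_gt1 /andP[alpha_gt0 alpha_lt1] B_indep B_binomial U.
rewrite /U (expectation_binomial_sum B_binomial).
rewrite (variance_binomial_sum B_binomial B_indep) lte_fin lee_fin.
set m := mseq s alpha n.
have m_gt0 k : (1 <= k)%N -> 0 < m k by exact: mseq_gt0.
have mE k : (1 <= k)%N -> (`|m k|%N)%:R = (m k)%:~R :> R.
  by move=> k_ge1; rewrite -[in RHS](gez0_abs (ltW (m_gt0 k k_ge1))).
split.
  apply: ltr_sum_nat => // k /andP[k_ge2 _].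
  have p_gt0 : 0 < ((n k)%:R - (n k.-1)%:R) / (n k)%:R :> R.
    case: k k_ge2 => [|k] // k_ge1.
    by rewrite divr_gt0 ?subr_gt0 ?ltr_nat ?ltr0n ?n_lt ?n_gt0.
  have M_gt0 : 0 < (`|m k|%N)%:R :> R by rewrite mE ?ltr0z ?m_gt0 // ltnW.
  by rewrite gtr_pMr ?(mulr_gt0 M_gt0 p_gt0) // gtrDl oppr_lt0.
under eq_big_nat => k /andP[/ltnW k_ge1 _] do rewrite mE //.
exact: (sum_mseq_mean_le n_gt0 n_lt s_gt1 alpha_gt0 alpha_lt1 K (ltnW K_ge2)).
Qed.
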